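(* Let $A=(Q,q_0,\Sigma,\delta,\alpha)$ with $Q_d$ be an LDBA and $\mathsf{Ord}$ an ordering of its states w.r.t. $Q_d$, and let $B$ be the deterministic parity automaton constructed from $A$ and $\mathsf{Ord}$ as described in the context. Then $\mathsf L(A)=\mathsf L(B)$.
   Context: A (transition-based) nondeterministic Büchi automaton is $A=(Q,q_0,\Sigma,\delta,\alpha)$ with finite $Q$, $q_0\in Q$, finite alphabet $\Sigma$, total $\delta\subseteq Q\times\Sigma\times Q$, accepting transitions $\alpha\subseteq\delta$; a run is accepting if it uses transitions of $\alpha$ infinitely often, and $\mathsf L(A)$ is the set of words with an accepting run. An LDBA additionally has $Q_d\subseteq Q$ with (1) $\alpha\subseteq Q_d\times\Sigma\times Q_d$; (2) each $q\in Q_d$ has exactly one $\sigma$-successor $\delta(q,\sigma)$ for each $\sigma$; (3) successors of states in $Q_d$ lie in $Q_d$. Assume $q_0\notin Q_d$ and write $\overline{Q_d}=Q\setminus Q_d$. For $S\subseteq Q$, $\mathsf{post}^\sigma_\delta(S)=\{q'\mid\exists q\in S:(q,\sigma,q')\in\delta\}$. An ordering w.r.t. $Q_d$ is $\mathsf{Ord}:Q\to\{1,\dots,|Q_d|,+\infty\}$ with value $+\infty$ exactly on $\overline{Q_d}$ and injective on $Q_d$. A deterministic parity automaton (DPA) $(Q',q_0',\Sigma,\delta',p)$ has a deterministic total transition function and a coloring $p$ assigning an integer to each transition; a word is accepted iff on its (unique) run the minimal color occurring infinitely often is even. For a finite set $S$, $\mathcal{OP}(S)$ is the set of pairs $(t,<)$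 with $t\subseteq S$ and $<$ a strict total order on $t$; $\mathsf{Ind}_{(t,<)}(e)$ is the position of $e\in t$ in $<$ (minimum has index 1). The DPA $B=(Q^B,q^B_0,\Sigma,\delta^B,p)$: $Q^B=\mathcal P(\overline{Q_d})\times\mathcal{OP}(Q_d)$, $q^B_0=(\{q_0\},(\emptyset,\emptyset))$. For a state $(s_1,(t_1,<_1))$ and $\sigma\in\Sigma$, $\delta^B((s_1,(t_1,<_1)),\sigma)=(s_2,(t_2,<_2))$ where $s_2=\mathsf{post}^\sigma_\delta(s_1)\cap\overline{Q_d}$, $t_2=\mathsf{post}^\sigma_\delta(s_1\cup t_1)\cap Q_d$, and for $q_1,q_2\in t_2$, $q_1<_2q_2$ iff one of: (a) neither $q_1$ nor $q_2$ equals $\delta(q',\sigma)$ for any $q'\in t_1$, and $\mathsf{Ord}(q_1)<\mathsf{Ord}(q_2)$; (b) $q_1=\delta(q_1',\sigma)$ for some $q_1'\in t_1$ but $q_2$ is not $\delta(q',\sigma)$ for any $q'\in t_1$; (c) both have such predecessors in $t_1$ and $\min_{<_1}\{q'\in t_1\mid\delta(q',\sigma)=q_1\}<_1\min_{<_1}\{q'\in t_1\mid\delta(q',\sigma)=q_2\}$. Coloring of this transition: let $\mathsf{Dec}(t_1)=\{q\in t_1\mid \mathsf{Ind}_{(t_2,<_2)}(\delta(q,\sigma))<\mathsf{Ind}_{(t_1,<_1)}(q)\}$ and $\mathsf{Acc}(t_1)=\{q\in t_1\mid\exists q'\in t_2:(q,\sigma,q')\in\alpha\}$. The color is: if $\mathsf{Dec}(t_1)=\emptyset\ne\mathsf{Acc}(t_1)$: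 $2\min_{q\in\mathsf{Acc}(t_1)}\mathsf{Ind}_{(t_1,<_1)}(q)$; if $\mathsf{Dec}(t_1)\ne\emptyset=\mathsf{Acc}(t_1)$: $2\min_{q\in\mathsf{Dec}(t_1)}\mathsf{Ind}_{(t_1,<_1)}(q)-1$; if both nonempty: the minimum of these two values; if both empty: $2|Q_d|+1$. *)

From mathcomp Require Import all_boot.
Set Implicit Arguments. Unset Strict Implicit. Unset Printing Implicit Defensive.

Section Automata.
Variables (Q Sigma : finType).

Definition word := nat -> Sigma.

Definition total_rel (delta : Q -> Sigma -> Q -> bool) : Prop :=
  forall q a, exists q', delta q a q'.

Definition NBA_run (q0 : Q) (delta : Q -> Sigma -> Q -> bool) (w : word)
  (r : nat -> Q) : Prop :=
  r 0 = q0 /\ forall i, delta (r i) (w i) (r i.+1).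

Definition NBA_accepting_run (alpha : Q -> Sigma -> Q -> bool) (w : word)
  (r : nat -> Q) : Prop :=
  forall N, exists i, N <= i /\ alpha (r i) (w i) (r i.+1).

Definition NBA_accepts q0 delta alpha (w : word) : Prop :=
  exists r, NBA_run q0 delta w r /\ NBA_accepting_run alpha w r.

Definition is_LDBA (q0 : Q) (delta alpha : Q -> Sigma -> Q -> bool)
  (Qd : {set Q}) : Prop :=
  [/\ total_rel delta /\ (forall q a q', alpha q a q' -> delta q a q'),
      (forall q a q', alpha q a q' -> q \in Qd /\ q' \in Qd),
      (forall q a, q \in Qd -> exists q', forall q'', delta q a q'' <-> q'' = q'),
      (forall q a q', q \in Qd -> delta q a q' -> q' \in Qd)
    & q0 \notin Qd].

(** Ord : Q -> {1..|Qd|, +oo}, with None standing for +oo. *)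
Definition is_ordering (Qd : {set Q}) (Ord : Q -> option nat) : Prop :=
  [/\ (forall q, Ord q = None <-> q \notin Qd),
      (forall q, q \in Qd -> exists n, Ord q = Some n /\ 1 <= n <= #|Qd|)
    & (forall q1 q2, q1 \in Qd -> q2 \in Qd -> Ord q1 = Ord q2 -> q1 = q2)].

Definition ordlt (o1 o2 : option nat) : bool :=
  match o1, o2 with
  | Some m, Some n => m < n
  | Some _, None => true
  | None, _ => false
  end.

(** The deterministic successor delta(q, a) (meaningful for q in Qd, where it
    is unique). *)
Definition dsucc (delta : Q -> Sigma -> Q -> bool) (q : Q) (a : Sigma) : Q :=
  odflt q [pick q' | delta q a q'].

Definition post (delta : Q -> Sigma -> Q -> bool) (S : {set Q}) (a : Sigma)
  : {set Q} := [set q' | [exists q in S, delta q a q']].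

Record DPA (S : Type) := MkDPA {
  dpa_init : S;
  dpa_trans : S -> Sigma -> S;
  dpa_color : S -> Sigma -> nat }.

Fixpoint dpa_run S (B : DPA S) (w : word) (i : nat) : S :=
  match i with
  | 0 => dpa_init B
  | i'.+1 => dpa_trans B (dpa_run B w i') (w i')
  end.

Definition dpa_color_at S (B : DPA S) (w : word) (i : nat) : nat :=
  dpa_color B (dpa_run B w i) (w i).

Definition inf_often_color S (B : DPA S) (w : word) (c : nat) : Prop :=
  forall N, exists i, N <= i /\ dpa_color_at B w i = c.

Definition DPA_accepts S (B : DPA S) (w : word) : Prop :=
  exists c, [/\ inf_often_color B w c,
                (forall c', inf_often_color B w c' -> c <= c') & ~~ odd c].

(** A state (s, (t, <)) is represented as a pair (s, l) where l : seq Q is the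
    (duplicate-free) list of the elements of t in increasing <-order; thus
    t = elements of l, and Ind_(t,<)(e) = index e l + 1. *)
Definition Bstate := ({set Q} * seq Q)%type.

Section Construction.
Variables (delta alpha : Q -> Sigma -> Q -> bool) (Qd : {set Q})
          (Ord : Q -> option nat).

Definition t_of (l : seq Q) : {set Q} := [set q in l].

Definition haspred (l1 : seq Q) (a : Sigma) (q : Q) : bool :=
  has (fun q' => dsucc delta q' a == q) l1.

(** index (w.r.t. <1) of min_{<1} {q' in t1 | delta(q', a) = q} *)
Definition minpred (l1 : seq Q) (a : Sigma) (q : Q) : nat :=
  find (fun q' => dsucc delta q' a == q) l1.

Definition lt2 (l1 : seq Q) (a : Sigma) (q1 q2 : Q) : bool :=
  [|| [&& ~~ haspred l1 a q1, ~~ haspred l1 a q2 & ordlt (Ord q1) (Ord q2)],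
      haspred l1 a q1 && ~~ haspred l1 a q2
    | [&& haspred l1 a q1, haspred l1 a q2 & minpred l1 a q1 < minpred l1 a q2]].

Definition B_trans (st : Bstate) (a : Sigma) : Bstate :=
  let: (s1, l1) := st in
  let s2 := post delta s1 a :\: Qd in
  let t2 := post delta (s1 :|: t_of l1) a :&: Qd in
  (s2, sort (fun x y => (x == y) || lt2 l1 a x y) (enum t2)).

Definition B_color (st : Bstate) (a : Sigma) : nat :=
  let: (s1, l1) := st in
  let: (_, l2) := B_trans st a in
  let t2 := t_of l2 in
  let Dec := fun q => index (dsucc delta q a) l2 < index q l1 in
  let Acc := fun q => [exists q' in t2, alpha q a q'] in
  (* 2 * min_{q in Acc} Ind(q)  and  2 * min_{q in Dec} Ind(q) - 1 *)
  let accv := 2 * (find Acc l1).+1 in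
  let decv := 2 * (find Dec l1).+1 - 1 in
  match has Dec l1, has Acc l1 with
  | false, true => accv
  | true, false => decv
  | true, true => minn accv decv
  | false, false => 2 * #|Qd| + 1
  end.

Definition B_DPA (q0 : Q) : DPA Bstate :=
  MkDPA ([set q0], [::]) B_trans B_color.

End Construction.
End Automata.

(* B keeps the states of A reachable outside Qd as a set and those inside Qd as a list
   ordered by age.  A state of Qd has a unique successor, and its position in the list
   never increases; moreover the positions that do decrease in a step form a final
   segment of the list (once two successors collide, every later one moves forward).
   An accepting run of A eventually stays in Qd, so its position stabilises at some j:
   afterwards odd colours exceed 2(j+1) while its accepting steps give colours at most
   2(j+1), so the least recurring colour is even.  Conversely, if that colour is 2(j+1),
   then eventually no position up to j decreases, so the state at position j follows
   the deterministic transitions forever and takes an accepting one each time the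
   colour 2(j+1) recurs; prefixing a path from q0 gives an accepting run of A. *)

From mathcomp Require Import all_boot zify.
From Stdlib Require Import Classical.
Set Implicit Arguments. Unset Strict Implicit. Unset Printing Implicit Defensive.

Section SeqLemmas.
Variable T : eqType.

Lemma index_sorted_count (lt : rel T) (s : seq T) x :
  irreflexive lt -> transitive lt ->
  sorted (fun a b => (a == b) || lt a b) s -> uniq s -> x \in s ->
  index x s = count (lt ^~ x) s.
Proof.
move=> lt_irr lt_trans.
have le_trans : transitive (fun a b => (a == b) || lt a b).
  move=> y a b /orP[/eqP->//|lt_ay] /orP[/eqP<-|lt_yb]; first by rewrite lt_ay orbT.
  by rewrite (lt_trans _ _ _ lt_ay lt_yb) orbT.
rewrite (sorted_pairwise le_trans).
elim: s => // y s IHs /= /andP[le_y_s sorted_s] /andP[y_notin_s uniq_s].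
rewrite inE; case: (eqVneq x y) => [->|x_neq_y] /= => [_|x_in_s].
  rewrite lt_irr; apply/esym/eqP; rewrite -leqn0 leqNgt -has_count.
  apply/hasPn => z z_in_s /=; have /orP[/eqP y_eq_z|lt_yz] := allP le_y_s z z_in_s.
    by move: y_notin_s; rewrite y_eq_z z_in_s.
  by apply/negP => lt_zy; move: (lt_irr y); rewrite (lt_trans _ _ _ lt_yz lt_zy).
have /orP[/eqP y_eq_x|->] := allP le_y_s x x_in_s; first by rewrite y_eq_x eqxx in x_neq_y.
by rewrite IHs.
Qed.

Lemma count_mem_undup (s S : seq T) :
  uniq s -> {subset S <= s} -> count (mem S) s = size (undup S).
Proof.
move=> uniq_s S_sub_s; rewrite -size_filter; apply/perm_size/uniq_perm.
- exact: filter_uniq.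
- exact: undup_uniq.
by move=> z; rewrite mem_filter mem_undup andb_idr //; apply: S_sub_s.
Qed.

Lemma find_le_index (P : pred T) s x : P x -> x \in s -> find P s <= index x s.
Proof.
move=> Px; elim: s => //= y s IHs; rewrite inE.
by case: (eqVneq y x) => [->|_] /=; [rewrite Px | case: (P y) => //; apply: IHs].
Qed.

End SeqLemmas.

Lemma has_take_find (T : Type) (P : pred T) s m :
  has P (take m s) = has P s && (find P s < m).
Proof.
case has_P: (has P s); first by rewrite has_take.
by apply: contraFF has_P; rewrite -{2}(cat_take_drop m s) has_cat => ->.
Qed.

Section NatSequences.
Variable f : nat -> nat.

Definition infinitely_often (c : nat) : Prop := forall N, exists n, N <= n /\ f n = c.

Lemma eventually_geq_of_finitely_often k :
  (forall c, c < k -> ~ infinitely_often c) -> exists K, forall n, K <= n -> k <= f n.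
Proof.
elim: k => [|k IHk] rare; first by exists 0.
have [K geq_k] := IHk (fun c lt_ck => rare c (ltnW lt_ck)).
have [N neq_k] := not_all_ex_not _ _ (rare k (ltnSn k)).
exists (maxn K N) => n le_n; rewrite ltn_neqAle geq_k 1?andbT; last lia.
by apply/eqP => fn_k; apply: neq_k; exists n; split=> //; lia.
Qed.

Lemma infinitely_often_min c : infinitely_often c ->
  exists m, infinitely_often m /\ forall c', infinitely_often c' -> m <= c'.
Proof.
elim/ltn_ind: c => c IHc io_c.
case: (classic (exists c', c' < c /\ infinitely_often c')) => [[c' [lt_c'c io_c']]|].
  exact: IHc io_c'.
move=> no_smaller; exists c; split=> // c' io_c'; rewrite leqNgt; apply/negP => lt_c'c.
by apply: no_smaller; exists c'.
Qed.

Lemma nonincreasing_stabilizes k : (forall n, k <= n -> f n.+1 <= f n) ->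
  exists K, k <= K /\ forall n, K <= n -> f n = f K.
Proof.
elim/ltn_ind: (f k) {-2}k (leqnn (f k)) => v IHv {}k fk_v noninc.
have fn_le_fk n : k <= n -> f n <= f k.
  elim: n => [|n IHn]; first by rewrite leqn0 => /eqP->.
  rewrite leq_eqVlt => /orP[/eqP<-//|lt_kn]; exact: leq_trans (noninc n lt_kn) (IHn lt_kn).
case: (classic (exists n, k <= n /\ f n < f k)) => [[n [le_kn lt_fn]]|constant].
  have [K [le_nK stable]] := IHv (f n) (leq_trans lt_fn fk_v) n (leqnn _)
    (fun m le_nm => noninc m (leq_trans le_kn le_nm)).
  by exists K; split=> //; apply: leq_trans le_kn le_nK.
exists k; split=> // n le_kn; apply/eqP; rewrite eqn_leq fn_le_fk // leqNgt.
by apply/negP => lt_fn; apply: constant; exists n.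
Qed.

Lemma min_infinitely_often_even b K :
  (forall N, exists n, N <= n /\ f n <= b) -> (forall n, K <= n -> odd (f n) -> b < f n) ->
  exists m, [/\ infinitely_often m, forall c, infinitely_often c -> m <= c & ~~ odd m].
Proof.
move=> small_recurs odd_large.
have [c [le_cb io_c]] : exists c, c <= b /\ infinitely_often c.
  apply: NNPP => none_small.
  have [K' geq_b1] := @eventually_geq_of_finitely_often b.+1
    (fun c lt_cb io_c => none_small (ex_intro _ c (conj lt_cb io_c))).
  have [n [le_n fn_b]] := small_recurs K'.
  by have := geq_b1 n le_n; rewrite ltnNge fn_b.
have [m [io_m min_m]] := infinitely_often_min io_c.
exists m; split=> //; apply/negP => odd_m.
have [n [le_Kn fn_m]] := io_m K.
by have := odd_large n le_Kn; rewrite fn_m => /(_ odd_m); have := min_m c io_c; lia.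
Qed.

End NatSequences.

Section OneStep.
Variables (Q Sigma : finType) (delta : Q -> Sigma -> Q -> bool) (Qd : {set Q})
  (Ord : Q -> option nat).
Hypothesis delta_total : total_rel delta.
Hypothesis delta_det :
  forall q a, q \in Qd -> exists q', forall q'', delta q a q'' <-> q'' = q'.
Hypothesis Qd_closed : forall q a q', q \in Qd -> delta q a q' -> q' \in Qd.
Hypothesis Ord_None : forall q, Ord q = None <-> q \notin Qd.
Hypothesis Ord_inj :
  forall q1 q2, q1 \in Qd -> q2 \in Qd -> Ord q1 = Ord q2 -> q1 = q2.

Lemma dsucc_delta q a : delta q a (dsucc delta q a).
Proof.
rewrite /dsucc; case: pickP => [q' //|no_succ].
by have [q' delta_qq'] := delta_total q a; move: (no_succ q'); rewrite delta_qq'.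
Qed.

Lemma dsuccE q a q' : q \in Qd -> delta q a q' -> q' = dsucc delta q a.
Proof.
move=> q_in delta_qq'; have [q'' uniq_succ] := delta_det a q_in.
by rewrite (proj1 (uniq_succ _) delta_qq') (proj1 (uniq_succ _) (dsucc_delta q a)).
Qed.

Lemma ordlt_irr : irreflexive ordlt.
Proof. by case=> //= n; rewrite ltnn. Qed.

Lemma ordlt_trans : transitive ordlt.
Proof. by move=> [m|] [n|] [k|] //=; apply: ltn_trans. Qed.

Lemma lt2_irr l a : irreflexive (lt2 delta Ord l a).
Proof. by move=> x; rewrite /lt2 ordlt_irr ltnn; case: haspred. Qed.

Lemma lt2_trans l a : transitive (lt2 delta Ord l a).
Proof.
move=> y x z; rewrite /lt2.
case: (haspred delta l a x); case: (haspred delta l a y); case: (haspred delta l a z) => //=;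
  rewrite ?orbF ?orbT //; try apply: ltn_trans; apply: ordlt_trans.
Qed.

Variables (s1 : {set Q}) (l1 : seq Q) (a : Sigma).
Hypothesis l1_uniq : uniq l1.
Hypothesis l1_Qd : {subset l1 <= Qd}.

Let l2 := (B_trans delta Qd Ord (s1, l1) a).2.
Let succ q := dsucc delta q a.
Let succ_prefix k := map succ (take k l1).

Lemma mem_B_trans x : (x \in l2) = (x \in post delta (s1 :|: t_of l1) a :&: Qd).
Proof. by rewrite /l2 /= mem_sort mem_enum. Qed.

Lemma uniq_B_trans : uniq l2.
Proof. by rewrite /l2 /= sort_uniq enum_uniq. Qed.

Lemma B_trans_Qd : {subset l2 <= Qd}.
Proof. by move=> x; rewrite mem_B_trans inE => /andP[]. Qed.

Lemma succ_in_B_trans q : q \in l1 -> succ q \in l2.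
Proof.
move=> q_in; rewrite mem_B_trans !inE (Qd_closed (l1_Qd q_in) (dsucc_delta q a)) andbT.
by apply/existsP; exists q; rewrite !inE q_in orbT dsucc_delta.
Qed.

Lemma haspred_succ q : q \in l1 -> haspred delta l1 a (succ q).
Proof. by move=> q_in; apply/hasP; exists q. Qed.

Lemma minpred_inj x y : haspred delta l1 a x -> haspred delta l1 a y ->
  minpred delta l1 a x = minpred delta l1 a y -> x = y.
Proof.
move=> x_pred y_pred eq_min.
have /eqP <- := nth_find x x_pred; have /eqP <- := nth_find x y_pred.
by rewrite -/(minpred _ _ _ _) eq_min.
Qed.

Lemma sorted_B_trans : sorted (fun x y => (x == y) || lt2 delta Ord l1 a x y) l2.
Proof.
rewrite /l2 /=; apply: (sort_sorted_in (P := mem (post delta (s1 :|: t_of l1) a :&: Qd))).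
  move=> x y; rewrite !inE => /andP[_ x_Qd] /andP[_ y_Qd] /=.
  case: (eqVneq x y) => [->|x_neq_y] //=; rewrite /lt2.
  case x_pred: (haspred delta l1 a x); case y_pred: (haspred delta l1 a y) => //=.
    by rewrite -neq_ltn; apply: contra_neq x_neq_y; apply: minpred_inj.
  case Ox: (Ord x) => [n|]; last by move/Ord_None: Ox; rewrite x_Qd.
  case Oy: (Ord y) => [k|]; last by move/Ord_None: Oy; rewrite y_Qd.
  rewrite !orbF /= -neq_ltn; apply: contra_neq x_neq_y => n_eq_k.
  by apply: Ord_inj => //; rewrite Ox Oy n_eq_k.
by apply/allP => x; rewrite mem_enum.
Qed.

(* Successors come first in l2, ordered by their earliest predecessor in l1, so those
   preceding x are exactly the successors of the first [minpred x] elements of l1. *)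
Lemma index_B_trans x : x \in l2 -> haspred delta l1 a x ->
  index x l2 = size (undup (succ_prefix (minpred delta l1 a x))).
Proof.
move=> x_in x_pred.
rewrite (index_sorted_count (@lt2_irr l1 a) (@lt2_trans l1 a) sorted_B_trans
  uniq_B_trans x_in).
rewrite -(count_mem_undup uniq_B_trans); last first.
  by move=> z /mapP[q /mem_take q_in ->]; apply: succ_in_B_trans.
apply: eq_in_count => y _ /=.
by rewrite /lt2 x_pred !andbF /= -has_pred1 has_map has_take_find.
Qed.

Lemma minpred_succ_le q : q \in l1 -> minpred delta l1 a (succ q) <= index q l1.
Proof. by move=> q_in; apply: find_le_index. Qed.

Lemma size_succ_prefix k : k <= size l1 -> size (succ_prefix k) = k.
Proof. by move=> le_k; rewrite size_map size_takel. Qed.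

Lemma index_succ_le q : q \in l1 -> index (succ q) l2 <= index q l1.
Proof.
move=> q_in; rewrite index_B_trans ?succ_in_B_trans ?haspred_succ //.
apply: leq_trans (size_undup _) _; rewrite size_map size_take.
have := index_mem q l1; rewrite q_in; have := minpred_succ_le q_in.
by case: ifP => // /negbT; lia.
Qed.

Lemma index_succ_uniq_prefix i x0 : i < size l1 -> uniq (succ_prefix i.+1) ->
  index (succ (nth x0 l1 i)) l2 = i.
Proof.
move=> lt_i uniq_pre; set q := nth x0 l1 i.
have q_in : q \in l1 by apply: mem_nth.
have minpred_q : minpred delta l1 a (succ q) = i.
  have := minpred_succ_le q_in; rewrite index_uniq // leq_eqVlt => /orP[/eqP//|lt_mi].
  have := nth_find x0 (haspred_succ q_in); rewrite -/(minpred _ _ _ _).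
  move: (minpred _ _ _ _) lt_mi => m lt_mi /eqP succ_m.
  have := nth_uniq x0 (s := succ_prefix i.+1) _ _ uniq_pre => /(_ m i).
  rewrite !size_succ_prefix ?(leq_trans lt_mi) // => /(_ isT (ltnSn i)).
  rewrite !(nth_map x0) ?size_takel ?(leq_trans lt_mi) // !nth_take //.
    by rewrite -/q (_ : succ (nth x0 l1 m) = succ q) // eqxx => /esym/eqP; lia.
  lia.
rewrite index_B_trans ?succ_in_B_trans ?haspred_succ // minpred_q undup_id.
  by rewrite size_succ_prefix //; lia.
by move: uniq_pre; rewrite /succ_prefix (take_nth x0 lt_i) map_rcons rcons_uniq => /andP[].
Qed.

Lemma index_succ_lt_mono i j x0 : i < j -> j < size l1 ->
  index (succ (nth x0 l1 i)) l2 < i -> index (succ (nth x0 l1 j)) l2 < j.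
Proof.
move=> lt_ij lt_j dec_i.
have not_uniq_i : ~~ uniq (succ_prefix i.+1).
  by apply: contraTN dec_i => uniq_pre; rewrite index_succ_uniq_prefix ?ltnn //; lia.
have not_uniq_j : ~~ uniq (succ_prefix j).
  apply: contra not_uniq_i => uniq_j.
  by rewrite /succ_prefix -(take_takel l1 lt_ij) map_take take_uniq.
have q_in : nth x0 l1 j \in l1 by apply: mem_nth.
rewrite index_B_trans ?succ_in_B_trans ?haspred_succ //.
have le_undup : size (undup (succ_prefix (minpred delta l1 a (succ (nth x0 l1 j)))))
    <= size (undup (succ_prefix j)).
  apply: uniq_leq_size; first exact: undup_uniq.
  move=> z; rewrite !mem_undup => /mapP[q q_in_pre ->]; apply: map_f.
  have := minpred_succ_le q_in; rewrite index_uniq // => le_mj.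
  by rewrite -(take_takel l1 le_mj) in q_in_pre; apply: mem_take q_in_pre.
have := uniq_size_uniq (undup_uniq (succ_prefix j)) (mem_undup (succ_prefix j)).
rewrite (negPf not_uniq_j) size_succ_prefix; last lia.
have := size_undup (succ_prefix j); rewrite size_succ_prefix; lia.
Qed.

End OneStep.

Section ParityColor.
Variables (T : Type) (D A : pred T) (l : seq T) (k : nat).

Definition parity_color : nat :=
  match has D l, has A l with
  | false, true => 2 * (find A l).+1
  | true, false => 2 * (find D l).+1 - 1
  | true, true => minn (2 * (find A l).+1) (2 * (find D l).+1 - 1)
  | false, false => 2 * k + 1
  end.

Lemma parity_color_even :
  ~~ odd parity_color -> has A l /\ parity_color = 2 * (find A l).+1.
Proof.
by rewrite /parity_color; case: (has D l); case: (has A l) => /=; lia.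
Qed.

Lemma parity_color_le_acc : has A l -> parity_color <= 2 * (find A l).+1.
Proof. by rewrite /parity_color => ->; case: (has D l); lia. Qed.

Lemma parity_color_lt_dec : has D l -> parity_color < 2 * (find D l).+1.
Proof. by rewrite /parity_color => ->; case: (has A l); lia. Qed.

Lemma parity_color_odd : odd parity_color ->
  parity_color = (2 * k).+1 \/ has D l /\ parity_color = (2 * find D l).+1.
Proof.
by rewrite /parity_color; case: (has D l); case: (has A l) => /=; lia.
Qed.

End ParityColor.

Section Correctness.
Variables (Q Sigma : finType) (q0 : Q) (delta alpha : Q -> Sigma -> Q -> bool)
  (Qd : {set Q}) (Ord : Q -> option nat).
Hypothesis delta_total : total_rel delta.
Hypothesis alpha_delta : forall q a q', alpha q a q' -> delta q a q'.
Hypothesis alpha_Qd : forall q a q', alpha q a q' -> q \in Qd /\ q' \in Qd.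
Hypothesis delta_det :
  forall q a, q \in Qd -> exists q', forall q'', delta q a q'' <-> q'' = q'.
Hypothesis Qd_closed : forall q a q', q \in Qd -> delta q a q' -> q' \in Qd.
Hypothesis q0_notin_Qd : q0 \notin Qd.
Hypothesis Ord_None : forall q, Ord q = None <-> q \notin Qd.
Hypothesis Ord_inj :
  forall q1 q2, q1 \in Qd -> q2 \in Qd -> Ord q1 = Ord q2 -> q1 = q2.
Variable w : word Sigma.

Let B := B_DPA delta alpha Qd Ord q0.
Let s n := (dpa_run B w n).1.
Let l n := (dpa_run B w n).2.
Let col n := dpa_color_at B w n.
Let succ n q := dsucc delta q (w n).
Let Dec n q := index (succ n q) (l n.+1) < index q (l n).
Let Acc n q := [exists q' in t_of (l n.+1), alpha q (w n) q'].

Lemma run_listS n : l n.+1 = (B_trans delta Qd Ord (s n, l n) (w n)).2.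
Proof. by rewrite /l /s -surjective_pairing. Qed.

Lemma run_setS n : s n.+1 = post delta (s n) (w n) :\: Qd.
Proof. by rewrite /s /=; case: (dpa_run B w n). Qed.

Lemma run_colorE n : col n = parity_color (Dec n) (Acc n) (l n) #|Qd|.
Proof. by rewrite /col /Dec /Acc /l /dpa_color_at /=; case: (dpa_run B w n). Qed.

Lemma run_list_uniq_Qd n : uniq (l n) /\ {subset l n <= Qd}.
Proof.
case: n => [|n]; first by [].
by rewrite run_listS; split; [apply: uniq_B_trans | apply: B_trans_Qd].
Qed.

Lemma mem_run_listS n x :
  (x \in l n.+1) = (x \in post delta (s n :|: t_of (l n)) (w n) :&: Qd).
Proof. by rewrite run_listS mem_B_trans. Qed.

Lemma succ_in_run_list n q : q \in l n -> succ n q \in l n.+1.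
Proof.
by have [? ?] := run_list_uniq_Qd n; rewrite run_listS; apply: succ_in_B_trans.
Qed.

Lemma index_succ_run_le n q : q \in l n -> index (succ n q) (l n.+1) <= index q (l n).
Proof.
by have [? ?] := run_list_uniq_Qd n; rewrite run_listS; apply: index_succ_le.
Qed.

Lemma size_run_list n : size (l n) <= #|Qd|.
Proof.
have [uniq_l l_Qd] := run_list_uniq_Qd n; rewrite cardE.
by apply: uniq_leq_size => // x /l_Qd; rewrite mem_enum.
Qed.

Lemma nba_run_tracked r : NBA_run q0 delta w r ->
  forall n, if r n \in Qd then r n \in l n else r n \in s n.
Proof.
move=> [r0 r_step]; elim=> [|n IHn]; first by rewrite r0 (negPf q0_notin_Qd) inE.
have r_pred_in : r n \in s n :|: t_of (l n).
  by rewrite !inE; move: IHn; case: (r n \in Qd) => ->; rewrite ?orbT.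
case: ifP => rS_Qd.
  rewrite mem_run_listS inE rS_Qd andbT inE.
  by apply/existsP; exists (r n); rewrite r_pred_in r_step.
rewrite run_setS inE rS_Qd inE; apply/existsP; exists (r n); rewrite r_step andbT.
by move: IHn; case: ifP => // rn_Qd; move: rS_Qd; rewrite (Qd_closed rn_Qd (r_step n)).
Qed.

Lemma index_succ_run_lt_mono n i j x0 : i < j -> j < size (l n) ->
  index (succ n (nth x0 (l n) i)) (l n.+1) < i ->
  index (succ n (nth x0 (l n) j)) (l n.+1) < j.
Proof.
by have [? ?] := run_list_uniq_Qd n; rewrite run_listS; apply: index_succ_lt_mono.
Qed.

Lemma odd_color_gt_stable_index n q j :
  q \in l n -> index q (l n) = j -> index (succ n q) (l n.+1) = j ->
  odd (col n) -> 2 * j.+1 < col n.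
Proof.
move=> q_in idx_q idx_succ; have lt_j : j < size (l n) by rewrite -idx_q index_mem.
rewrite run_colorE => /parity_color_odd[->|[has_dec ->]].
  by have := size_run_list n; lia.
suff: j < find (Dec n) (l n) by lia.
have [uniq_l _] := run_list_uniq_Qd n.
have nth_j : nth q (l n) j = q by rewrite -idx_q nth_index.
have := nth_find q has_dec; rewrite /Dec index_uniq -?has_find // => dec_find.
rewrite ltnNge leq_eqVlt; apply/negP => /orP[/eqP eq_j|lt_find].
  by move: dec_find; rewrite eq_j nth_j idx_succ ltnn.
by have := index_succ_run_lt_mono lt_find lt_j dec_find; rewrite nth_j idx_succ ltnn.
Qed.

Lemma accepting_color_le n q q' :
  q \in l n -> q' \in l n.+1 -> alpha q (w n) q' -> col n <= 2 * (index q (l n)).+1.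
Proof.
move=> q_in q'_in acc_q; have acc : Acc n q by apply/exists_inP; exists q'; rewrite ?inE.
have has_acc : has (Acc n) (l n) by apply/hasP; exists q.
rewrite run_colorE; apply: leq_trans (parity_color_le_acc (Dec n) #|Qd| has_acc) _.
by rewrite leq_mul2l ltnS find_le_index.
Qed.

Lemma nba_accepts_dpa : NBA_accepts q0 delta alpha w -> DPA_accepts B w.
Proof.
move=> [r [r_run r_acc]]; have tracked := nba_run_tracked r_run.
have [_ r_step] := r_run.
have [k rk_Qd] : exists k, r k \in Qd by have [i [_ /alpha_Qd[]]] := r_acc 0; exists i.
have r_Qd n : k <= n -> r n \in Qd.
  elim: n => [|n IHn] le_kn; first by move: le_kn rk_Qd; rewrite leqn0 => /eqP->.
  case: (leqP k n) => [le_kn'|lt_nk]; first exact: Qd_closed (IHn le_kn') (r_step n).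
  by have -> : n.+1 = k by lia.
have r_in n : k <= n -> r n \in l n by move=> le_kn; have := tracked n; rewrite r_Qd.
have r_succ n : k <= n -> r n.+1 = succ n (r n).
  by move=> le_kn; apply: (dsuccE delta_total delta_det (r_Qd n le_kn) (r_step n)).
pose f n := index (r n) (l n).
have [K [le_kK f_stable]] : exists K, k <= K /\ forall n, K <= n -> f n = f K.
  apply: nonincreasing_stabilizes => n le_kn.
  by rewrite /f r_succ // index_succ_run_le // r_in.
apply: (@min_infinitely_often_even col (2 * (f K).+1) K) => [N|n le_Kn].
  have [n [le_n acc_n]] := r_acc (maxn N K); exists n; split; first lia.
  rewrite -(f_stable n) 1?leq_maxr ?(leq_trans (leq_maxr N K)) //.
  by apply: accepting_color_le acc_n; apply: r_in; lia.
apply: (@odd_color_gt_stable_index n (r n)); first exact: r_in (leq_trans le_kK le_Kn).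
  exact: f_stable.
by rewrite -r_succ ?(leq_trans le_kK) //; apply: f_stable; lia.
Qed.

Lemma nth_run_listS n j : 2 * j.+1 <= col n -> j < size (l n) ->
  j < size (l n.+1) /\ nth q0 (l n.+1) j = succ n (nth q0 (l n) j).
Proof.
move=> ge_col lt_j; set q := nth q0 (l n) j.
have [uniq_l _] := run_list_uniq_Qd n.
have q_in : q \in l n by apply: mem_nth.
have no_dec : ~~ Dec n q.
  apply/negP => dec_q; have has_dec : has (Dec n) (l n) by apply/hasP; exists q.
  have := parity_color_lt_dec (Acc n) #|Qd| has_dec; rewrite -run_colorE => lt_col.
  have lt_jf : j < find (Dec n) (l n) by lia.
  by move: dec_q; rewrite /q (before_find q0 lt_jf).
have idx_succ : index (succ n q) (l n.+1) = j.
  have := index_succ_run_le q_in; move: no_dec; rewrite /Dec index_uniq //; lia.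
have succ_in := succ_in_run_list q_in.
by split; [rewrite -idx_succ index_mem | rewrite -idx_succ nth_index].
Qed.

Lemma even_color_acc n j : col n = 2 * j.+1 -> j < size (l n) /\ Acc n (nth q0 (l n) j).
Proof.
move=> col_j; have [|has_acc col_find] := @parity_color_even _ (Dec n) (Acc n) (l n) #|Qd|.
  by rewrite -run_colorE col_j mul2n odd_double.
have find_j : find (Acc n) (l n) = j by move: col_find; rewrite -run_colorE col_j; lia.
by rewrite -find_j -has_find; split=> //; apply: nth_find.
Qed.

Lemma run_prefix n q : (q \in s n) || (q \in l n) -> exists p : nat -> Q,
  [/\ p 0 = q0, forall i, i < n -> delta (p i) (w i) (p i.+1) & p n = q].
Proof.
elim: n q => [|n IHn] q.
  by rewrite inE orbF => /eqP ->; exists (fun _ => q0).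
move=> q_in; have [q' q'_in delta_q'q] :
    exists2 q', (q' \in s n) || (q' \in l n) & delta q' (w n) q.
  move: q_in; rewrite run_setS mem_run_listS !inE.
  case/orP=> [/andP[_ /existsP[q' /andP[q'_in delta_q'q]]]
            | /andP[/existsP[q' /andP[q'_in delta_q'q]] _]]; exists q' => //.
  - by rewrite q'_in.
  - by move: q'_in; rewrite !inE.
have [p [p0 p_step pn]] := IHn q' q'_in.
exists (fun i => if i <= n then p i else q); split=> [|i lt_in|]; rewrite ?ltnn //.
rewrite -ltnS lt_in; case: (ltnP i n) => [lt_in'|ge_in]; first exact: p_step.
have -> : i = n by lia.
by rewrite pn.
Qed.

Lemma nba_accepts_of_stable_position n0 j : j < size (l n0) ->
  (forall n, n0 <= n -> 2 * j.+1 <= col n) ->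
  (forall N, exists i, N <= i /\ col i = 2 * j.+1) -> NBA_accepts q0 delta alpha w.
Proof.
move=> lt_j col_ge col_recurs.
have j_size n : n0 <= n -> j < size (l n).
  move=> /subnK <-; elim: (n - n0) => // d IHd.
  by rewrite addSn; apply: (nth_run_listS (col_ge _ _) IHd).1; rewrite leq_addl.
have stable n : n0 <= n -> nth q0 (l n.+1) j = succ n (nth q0 (l n) j).
  by move=> le_n0n; apply: (nth_run_listS (col_ge n le_n0n) (j_size n le_n0n)).2.
have [|p [p0 p_step pn0]] := @run_prefix n0 (nth q0 (l n0) j).
  by rewrite mem_nth ?orbT.
pose rho i := if i <= n0 then p i else nth q0 (l i) j.
have rho_tail i : n0 <= i -> rho i = nth q0 (l i) j.
  by rewrite /rho leq_eqVlt => /orP[/eqP <-|/ltn_geF ->]; rewrite ?leqnn.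
have rho_step i : n0 <= i -> rho i.+1 = succ i (rho i).
  by move=> le_n0i; rewrite !rho_tail ?stable // (leq_trans le_n0i).
exists rho; split; first split.
- by rewrite /rho leq0n.
- move=> i; case: (ltnP i n0) => [lt_in0|le_n0i]; last by rewrite rho_step // dsucc_delta.
  by rewrite /rho lt_in0 (ltnW lt_in0); apply: p_step.
move=> N; have [i [le_i col_i]] := col_recurs (maxn N n0).
have [lt_j_size /exists_inP[q' _ acc_j]] := even_color_acc col_i.
exists i; split; first lia.
have nth_Qd : nth q0 (l i) j \in Qd by exact: (run_list_uniq_Qd i).2 (mem_nth q0 lt_j_size).
rewrite rho_step ?rho_tail 1?(leq_trans (leq_maxr N n0) le_i) //.
by rewrite /succ -(dsuccE delta_total delta_det nth_Qd (alpha_delta acc_j)).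
Qed.

Lemma dpa_accepts_nba : DPA_accepts B w -> NBA_accepts q0 delta alpha w.
Proof.
move=> [m [io_m min_m even_m]].
have [K ge_m] : exists K, forall n, K <= n -> m <= col n.
  by apply: eventually_geq_of_finitely_often => c lt_cm /min_m; lia.
have [n0 [le_Kn0 col_n0]] : exists n0, K <= n0 /\ col n0 = m := io_m K.
have [|_] := @parity_color_even _ (Dec n0) (Acc n0) (l n0) #|Qd|.
  by rewrite -run_colorE col_n0.
rewrite -run_colorE col_n0; set j := find _ _ => m_j.
have [lt_j _] := even_color_acc (etrans col_n0 m_j).
apply: (nba_accepts_of_stable_position lt_j) => [n le_n0n|N].
  by rewrite -m_j ge_m //; lia.
by rewrite -m_j; apply: io_m.
Qed.

End Correctness.

Theorem mainTheorem3 (Q Sigma : finType) (q0 : Q)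
  (delta alpha : Q -> Sigma -> Q -> bool) (Qd : {set Q})
  (Ord : Q -> option nat) :
  is_LDBA q0 delta alpha Qd ->
  is_ordering Qd Ord ->
  forall w : word Sigma,
    NBA_accepts q0 delta alpha w <->
    DPA_accepts (B_DPA delta alpha Qd Ord q0) w.
Proof.
move=> [[total alpha_delta] alpha_Qd det Qd_closed q0_notin] [Ord_None _ Ord_inj] w.
split; [exact: nba_accepts_dpa | exact: dpa_accepts_nba].
Qed.
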